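(* Let $\epsilon\in(0,1)$ and let $r=r(n)$ be any function with $r=o(\sqrt{\log n})$. Then for every $n$ there is a finite collection of linear equations $C_1,\dots,C_m$ over the dihedral group $\mathbf{D}_3$ on the variables $x_1,\dots,x_n$ such that every $(1\pm\epsilon)$ code sparsifier of $C_1,\dots,C_m$ has size at least $n^{r-o(1)}$. In particular (taking $r\to\infty$ slowly), there are such collections over a group of constant size for which every $(1\pm\epsilon)$ code sparsifier has size $n^{\omega(1)}=\log^{\omega(1)}(|\mathbf{D}_3^n|)$.
   Context: $\mathbf{D}_3$ is the dihedral group of order 6 (non-abelian). For a group $G$, a linear equation over $G$ on variables $x_1,\dots,x_n\in\{0,1\}$ is a map $C:\{0,1\}^n\to G$ of the form $C(x)=a_1^{x_1}a_2^{x_2}\cdots a_n^{x_n}$ with $a_1,\dots,a_n\in G$ (the product taken in this order, $a^0=1$). Given linear equations $C_1,\dots,C_m$, a $(1\pm\epsilon)$ code sparsifier is a subset $S\subseteq[m]$ with weights $w_i>0$ ($i\in S$) such that for every $x\in\{0,1\}^n$, $(1-\epsilon)\sum_{i\in[m]}\mathbf 1[C_i(x)\ne1]\le\sum_{i\in S}w_i\mathbf 1[C_i(x)\ne1]\le(1+\epsilon)\sum_{i\in[m]}\mathbf 1[C_i(x)\ne1]$; its size is $|S|$. *)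

From HB Require Import structures.
From mathcomp Require Import all_boot all_order all_algebra all_fingroup.
From mathcomp Require Import extremal.
From mathcomp Require Import all_classical all_reals all_analysis.
Set Implicit Arguments. Unset Strict Implicit. Unset Printing Implicit Defensive.
Import Order.TTheory GRing.Theory Num.Theory.

(* D3 = the dihedral group of order 6, MathComp's 'D_6 (extremal.v). *)
Definition D3 : finGroupType := dihedral_gtype 6.

Definition lin_eq (n : nat) (a : 'I_n -> D3) (x : 'I_n -> bool) : D3 :=
  (\prod_(j < n) (if x j then a j else 1))%g.

Definition nviol (n m : nat) (C : 'I_m -> 'I_n -> D3) (x : 'I_n -> bool) : nat :=
  #|[set i : 'I_m | lin_eq (C i) x != 1%g]|.

Definition is_code_sparsifier (R : realType) (n m : nat)
    (C : 'I_m -> 'I_n -> D3) (eps : R) (S : {set 'I_m}) (w : 'I_m -> R) : Prop :=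
  (forall i, i \in S -> (0 < w i)%R) /\
  forall x : 'I_n -> bool,
    ((1 - eps) * (nviol C x)%:R <=
       \sum_(i in S) w i * (lin_eq (C i) x != 1%g)%:R)%R /\
    (\sum_(i in S) w i * (lin_eq (C i) x != 1%g)%:R <=
       (1 + eps) * (nviol C x)%:R)%R.

From HB Require Import structures.
From mathcomp Require Import all_boot all_order all_algebra all_fingroup.
From mathcomp Require Import cyclic extremal.
From mathcomp Require Import all_classical all_reals all_analysis.
From mathcomp Require Import ring lra zify.
Set Implicit Arguments. Unset Strict Implicit. Unset Printing Implicit Defensive.
Import Order.TTheory GRing.Theory Num.Theory.
Import numFieldNormedType.Exports.

(* In D3 a reflection s inverts every rotation A, so A s A^-1 s = A ^+ 2.
   Hence the iterated commutator program of depth k built from a rotation rho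
   evaluates to the nontrivial rotation rho ^+ 2 ^ k when its k + 1 variables
   are all true, and to 1 otherwise (Barrington's trick).  Spreading every
   program variable over a block of N boolean variables turns this AND into an
   equality test between maps sig, tau : {0..k} -> [N]: the equation indexed by
   tau is violated at the point indexed by sig iff sig = tau.  Each of the
   N ^ (k + 1) equations is thus the only one violated at some point, so every
   (1 +- eps) sparsifier keeps all of them.  With k = floor r and
   N = n / 2 ^ (k + 2) this count is n ^ (r - O((|r| + 3) ^ 2 / log n)), and
   r ^ 2 = o(log n). *)

Section GroupPrograms.
Local Open Scope group_scope.

Section AndProgram.
Variable gT : finGroupType.
Implicit Types (rho s : gT) (y : nat -> bool) (p : seq (nat * gT)).

Definition prog_eval y p : gT := \prod_(q <- p) (if y q.1 then q.2 else 1).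

Definition prog_inv p := rev [seq (q.1, q.2^-1) | q <- p].

Lemma prog_eval_cat y p1 p2 : prog_eval y (p1 ++ p2) = prog_eval y p1 * prog_eval y p2.
Proof. exact: big_cat. Qed.

Lemma prog_eval_cons y q p :
  prog_eval y (q :: p) = (if y q.1 then q.2 else 1) * prog_eval y p.
Proof. exact: big_cons. Qed.

Lemma prog_eval_inv y p : prog_eval y (prog_inv p) = (prog_eval y p)^-1.
Proof.
elim: p => [|q p IHp]; first by rewrite /prog_eval !big_nil invg1.
rewrite /prog_inv map_cons rev_cons -cats1 prog_eval_cat -/(prog_inv p) IHp.
rewrite /prog_eval !big_cons big_nil mulg1 invMg /=.
by case: (y q.1); rewrite ?invg1.
Qed.

Fixpoint and_prog rho s k : seq (nat * gT) :=
  if k is k'.+1 then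
    let p := and_prog rho s k' in p ++ (k, s) :: prog_inv p ++ [:: (k, s)]
  else [:: (0, rho)].

Lemma size_and_prog rho s k : ((size (and_prog rho s k)).+2 = 3 * 2 ^ k)%N.
Proof.
elim: k => [|k IHk] //=.
by rewrite size_cat /= size_cat size_rev size_map /= expnS; lia.
Qed.

Lemma prog_eval_and_prog rho s y k : s ^+ 2 = 1 -> rho ^ s = rho^-1 ->
  prog_eval y (and_prog rho s k) = if all y (iota 0 k.+1) then rho ^+ (2 ^ k) else 1.
Proof.
move=> s2 rhoJs; elim: k => [|k IHk].
  by rewrite /prog_eval big_seq1 /=; case: (y 0).
have -> : all y (iota 0 k.+2) = all y (iota 0 k.+1) && y k.+1.
  by rewrite -addn1 iotaD all_cat /= andbT.
have sV : s^-1 = s by apply/eqP; rewrite eq_invg_mul -[s * s]/(s ^+ 2) s2.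
have powJs e : (rho ^+ e)^-1 ^ s = rho ^+ e.
  by rewrite conjVg conjXg rhoJs expVgn invgK.
rewrite [and_prog _ _ k.+1]/= !(prog_eval_cat, prog_eval_cons) prog_eval_inv IHk.
rewrite /prog_eval big_nil.
case: all; case: (y k.+1) => /=; rewrite ?mulg1 ?mul1g ?invg1 ?mulgV //.
  by rewrite expnS mulnC expgM expgS expg1 -[X in _ = _ * X]powJs /conjg sV !mulgA.
by rewrite mul1g -[s * s]/(s ^+ 2) s2.
Qed.

Lemma and_prog_neq1 rho s y k : odd #[rho] -> rho != 1 -> s ^+ 2 = 1 ->
  rho ^ s = rho^-1 -> (prog_eval y (and_prog rho s k) != 1) = all y (iota 0 k.+1).
Proof.
move=> odd_rho rho_neq1 s2 rhoJs; rewrite prog_eval_and_prog //.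
case: all; rewrite ?eqxx // -order_dvdn.
apply: contra rho_neq1 => /gcdn_idPl o_gcd; rewrite -order_eq1 -o_gcd.
by rewrite -[(_ == 1)%N]/(coprime _ _) coprimeXr // coprimen2.
Qed.
End AndProgram.

Lemma D3_rotation_reflection :
  exists rho s : D3, [/\ #[rho] = 3, s ^+ 2 = 1 & rho ^ s = rho^-1].
Proof.
have /existsP[[x y] /= /eqP[defD3 x3 y2 xJy]] := isoGrp_hom (@Grp_dihedral 3 isT).
exists x, y; split=> //.
have /primeP[_ /(_ #[x])] : prime 3 by [].
rewrite order_dvdn x3 eqxx => /(_ isT) /orP[/eqP o_x|/eqP //].
have := @card_dihedral 3 isT.
rewrite -defD3 (_ : x = 1) ?cycle1 ?joing1G; last by apply/eqP; rewrite -order_eq1 o_x.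
have : (#[y] <= 2)%N by apply: dvdn_leq; rewrite // order_dvdn y2.
by rewrite orderE => + card_y; rewrite card_y.
Qed.

Section BlockLayout.
Variables (gT : finGroupType) (p : seq (nat * gT)) (N : nat).
Local Notation instr l := (nth (0%N, 1) p l).

(* The variables j < size p * N form size p blocks of N, block l serving the
   instruction l, which reads the program variable v.  In block l the equation
   [block_coef tau] carries the element of the instruction only at offset
   tau v and the point [block_point sig] is true only at offset sig v, so the
   block contributes that element iff sig v = tau v. *)
Definition block_coef (tau : nat -> 'I_N) (j : nat) : gT :=
  if (j < size p * N)%N && (j %% N == tau (instr (j %/ N)).1) then (instr (j %/ N)).2
  else 1.

Definition block_point (sig : nat -> 'I_N) (j : nat) : bool :=
  (j < size p * N)%N && (j %% N == sig (instr (j %/ N)).1).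

Lemma prod_block_layout (sig tau : nat -> 'I_N) n : (size p * N <= n)%N ->
  \prod_(0 <= j < n) (if block_point sig j then block_coef tau j else 1)
  = prog_eval (fun v => sig v == tau v) p.
Proof.
move=> pN_le_n; have N_gt0 : (0 < N)%N := leq_ltn_trans (leq0n _) (ltn_ord (sig 0%N)).
rewrite (@big_cat_nat _ _ _ (size p * N) 0 n) //= [X in _ * X]big1_seq ?mulg1; last first.
  move=> j /andP[_]; rewrite mem_index_iota /block_point => /andP[pN_le_j _].
  by rewrite ltnNge pN_le_j.
rewrite big_nat_mul /prog_eval (big_nth (0%N, 1)); apply: eq_big_nat => l /andP[_ lt_l].
rewrite -{1}[(l * N)%N]add0n big_addn mulSn addnK.
have select (c : bool) (a : nat) (g : gT) : (a < N)%N ->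
    \prod_(0 <= i < N) (if (i == a) && c then g else 1) = if c then g else 1.
  move=> lt_a; case: c; last by rewrite big1 // => i _; rewrite andbF.
  by under eq_bigr do rewrite andbT; rewrite -big_mkcond big_nat1_eq lt_a.
rewrite -(select _ _ _ (ltn_ord (sig (instr l).1))); apply: eq_big_nat => i /andP[_ lt_i].
rewrite /block_point /block_coef addnC divnMDl // modnMDl divn_small // modn_small //.
rewrite addn0 (leq_trans (_ : _ < l.+1 * N)%N) ?leq_mul2r ?lt_l ?orbT //; last first.
  by rewrite mulSnr ltn_add2l.
by case: eqVneq => //= ->.
Qed.
End BlockLayout.

End GroupPrograms.

Local Open Scope classical_set_scope.
Local Open Scope ring_scope.

Lemma isolated_mem_sparsifier (R : realType) n m (C : 'I_m -> 'I_n -> D3) (eps : R)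
    S w i (x : 'I_n -> bool) :
  eps < 1 -> is_code_sparsifier C eps S w ->
  (forall j, (lin_eq (C j) x != 1%g) = (j == i)) -> i \in S.
Proof.
move=> eps_lt1 [_ spS] viol_x; apply: contraT => iNS.
have nviol1 : nviol C x = 1%N.
  rewrite /nviol (_ : [set j | _] = [set i])%SET ?cards1 //.
  by apply/setP => j; rewrite !inE viol_x.
have [+ _] := spS x; rewrite nviol1 big1 ?mulr1 ?subr_le0 ?leNgt ?eps_lt1 //.
by move=> j jS; rewrite viol_x; case: eqVneq jS iNS => [-> ->|] //; rewrite mulr0.
Qed.

Lemma all_iota_ffun_eq (T : eqType) k (f g : {ffun 'I_k.+1 -> T}) :
  all (fun v => f (inord v) == g (inord v)) (iota 0 k.+1) = (f == g).
Proof.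
apply/allP/eqP => [fg | -> //]; apply/ffunP => i.
by move/(_ i): fg; rewrite mem_iota ltn_ord inord_val => /(_ isT)/eqP.
Qed.

Lemma lin_eq_block n (p : seq (nat * D3)) N (sig tau : nat -> 'I_N) :
  (size p * N <= n)%N ->
  lin_eq (fun j : 'I_n => block_coef p tau j) (fun j => block_point p sig j)
  = prog_eval (fun v => sig v == tau v) p.
Proof.
rewrite /lin_eq -(big_mkord xpredT (fun j =>
  if block_point p sig j then block_coef p tau j else 1%g)).
exact: prod_block_layout.
Qed.

Lemma D3_unsparsifiable (R : realType) (eps : R) (k N n : nat) :
  eps < 1 -> (N * 2 ^ k.+2 <= n)%N ->
  exists m (C : 'I_m -> 'I_n -> D3),
    forall S w, is_code_sparsifier C eps S w -> (N ^ k.+1 <= #|S|)%N.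
Proof.
move=> eps_lt1 n_large.
have [rho [s [ord_rho s2 rhoJs]]] := D3_rotation_reflection.
have rho_neq1 : rho != 1%g by rewrite -order_eq1 ord_rho.
have odd_rho : odd #[rho]%g by rewrite ord_rho.
pose p := and_prog rho s k.
pose T := {ffun 'I_k.+1 -> 'I_N}.
pose idx (f : T) (v : nat) : 'I_N := f (inord v).
pose C (i : 'I_#|T|) (j : 'I_n) := block_coef p (idx (enum_val i)) j.
exists #|T|, C => S w spS.
have size_p : (size p * N <= n)%N.
  apply: leq_trans n_large; rewrite mulnC leq_mul2l; apply/orP; right.
  by have := size_and_prog rho s k; rewrite /p !expnS; lia.
have viol_block i j :
    (lin_eq (C j) (fun l => block_point p (idx (enum_val i)) l) != 1%g) = (j == i).
  rewrite lin_eq_block // (and_prog_neq1 _ _ odd_rho rho_neq1 s2 rhoJs).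
  by rewrite all_iota_ffun_eq (inj_eq enum_val_inj) eq_sym.
have card_T : #|T| = (N ^ k.+1)%N by rewrite card_ffun !card_ord.
rewrite -card_T -{1}(card_ord #|T|) -cardsT.
apply: subset_leq_card; apply/fintype.subsetP => i _.
exact: isolated_mem_sparsifier eps_lt1 spS (viol_block i).
Qed.

Section Logarithms.
Variable R : realType.

Lemma powR_le_of_le_ln (a M x : R) :
  0 < ln a -> 0 < M -> x <= ln M / ln a -> a `^ x <= M.
Proof.
move=> ln_a_gt0 M_gt0; rewrite ler_pdivlMr // => le_x.
rewrite /powR ifN; last by apply: contraTN ln_a_gt0 => /eqP->; rewrite ln0 ?ltxx.
by rewrite -[leRHS]lnK ?ler_expR.
Qed.

Lemma ln2_le1 : ln (2 : R) <= 1.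
Proof. by have := @le_ln1Dx R 1 ltac:(lra); rewrite -[1 + 1]/(2%:R). Qed.

Lemma exp2_le_of_le_ln (j n : nat) :
  (0 < n)%N -> j%:R <= ln (n%:R : R) -> (2 ^ j <= n)%N.
Proof.
move=> n_gt0 le_j.
rewrite -(ler_nat R) natrX; apply: le_trans (_ : expR j%:R <= _).
  rewrite -[X in expR X]mulr1 expRM_natl lerXn2r ?nnegrE ?ler0n ?expR_ge0 //.
  by have := @expR_ge1Dx R 1; rewrite -[1 + 1]/(2%:R).
by rewrite -[leRHS]lnK ?posrE ?ltr0n // ler_expR.
Qed.

Lemma ln_divn_exp2_ge (j n : nat) : (2 ^ j <= n)%N ->
  ln (n%:R : R) - j.+1%:R <= ln (n %/ 2 ^ j)%:R.
Proof.
move=> n_large; set q := (n %/ 2 ^ j)%N.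
have q_gt0 : (0 < q)%N by rewrite divn_gt0 ?expn_gt0.
have le_n : (n <= 2 ^ j.+1 * q)%N.
  have := divn_eq n (2 ^ j); have := ltn_pmod n (expn_gt0 2 j).
  have : (2 ^ j <= q * 2 ^ j)%N by rewrite leq_pmull.
  rewrite -/q expnS; lia.
have ln_n : ln (n%:R : R) <= j.+1%:R * ln 2 + ln q%:R.
  rewrite mulr_natl -lnXn // -natrX -lnM ?posrE ?ltr0n ?expn_gt0 // -natrM.
  rewrite ler_ln ?posrE ?ltr0n ?muln_gt0 ?expn_gt0 ?q_gt0 ?ler_nat //.
  by rewrite (leq_trans _ n_large) ?expn_gt0.
have := ler_wpM2l (ler0n R j.+1) ln2_le1; rewrite mulr1; lra.
Qed.

Lemma truncn_le_norm (x : R) : (Num.truncn x)%:R <= `|x|.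
Proof.
have [x_ge0 | x_lt0] := leP 0 x; first by rewrite ger0_norm // truncn_le.
by rewrite (truncn0Pn _ _) ?normr_ge0 // -ltNge (lt_trans x_lt0).
Qed.

Lemma truncn_defect_le (x : R) (n : nat) :
  let k := Num.truncn x in
  0 < ln (n%:R : R) -> (2 ^ k.+2 <= n)%N ->
  x - ln ((n %/ 2 ^ k.+2) ^ k.+1)%:R / ln n%:R <= (`|x| + 3) ^+ 2 / ln n%:R.
Proof.
move=> k ln_n_gt0 n_large; set l := ln (n%:R : R) in ln_n_gt0 *.
have q_gt0 : (0 < n %/ 2 ^ k.+2)%N by rewrite divn_gt0 ?expn_gt0.
have := ln_divn_exp2_ge n_large; rewrite -/l; set lq := ln _ => ln_q.
have x_lt : x < k.+1%:R by rewrite truncnS_gt.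
have k_le := truncn_le_norm x; rewrite -/k in k_le.
rewrite natrX lnXn ?ltr0n // -/lq -mulr_natl.
rewrite (_ : x - _ = (x * l - k.+1%:R * lq) / l); last by field; rewrite gt_eqF.
rewrite ler_pM2r ?invr_gt0 //.
have k0 : (0 : R) <= k%:R by rewrite ler0n.
have natS3 j : j.+3%:R = j%:R + 3 :> R by rewrite -natrD addn3.
have natS1 j : j.+1%:R = j%:R + 1 :> R by rewrite -natr1.
move: ln_q x_lt; rewrite natS3 natS1 mulr1 => ln_q x_lt.
have norm_x := normr_ge0 x.
have ln_q_scaled : (k%:R + 1) * (l - (k%:R + 3)) <= (k%:R + 1) * lq.
  by rewrite ler_wpM2l //; lra.
have x_l_le : x * l <= (k%:R + 1) * l by rewrite ler_wpM2r //; lra.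
have sq_bound : (k%:R + 1) * (k%:R + 3) <= (`|x| + 3) ^+ 2.
  by rewrite expr2; apply: ler_pM; lra.
lra.
Qed.
End Logarithms.

Section Asymptotics.
Variable R : realType.

Lemma ln_nat_ge_near (c : R) : \forall n \near \oo, c <= ln (n%:R : R).
Proof.
apply: filterS (nbhs_infty_ger (expR c)) => n le_n.
by rewrite -ler_expR lnK // posrE (lt_le_trans (expR_gt0 c)).
Qed.

Lemma cvg_invr_ln_nat : (fun n => (ln (n%:R : R))^-1) @ \oo --> 0.
Proof.
apply/cvgr0Pnorm_le => e e_gt0.
apply: filterS (ln_nat_ge_near e^-1) => n le_n.
have ln_gt0 : 0 < ln (n%:R : R) by apply: lt_le_trans le_n; rewrite invr_gt0.
by rewrite normfV gtr0_norm // -[leRHS]invrK lef_pV2 ?posrE ?invr_gt0.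
Qed.

Variable r : nat -> R.
Hypothesis r_small : (fun n => r n / Num.sqrt (ln (n%:R : R))) @ \oo --> 0.

Lemma cvg_sqr_normr_add3_div_ln :
  (fun n => (`|r n| + 3) ^+ 2 / ln (n%:R : R)) @ \oo --> 0.
Proof.
pose b n := 2 * ((r n / Num.sqrt (ln (n%:R : R))) * (r n / Num.sqrt (ln (n%:R : R))))
  + 18 * (ln (n%:R : R))^-1.
have b_cvg : b @ \oo --> 0.
  have := cvgD (cvgM (cvg_cst (2 : R)) (cvgM r_small r_small))
    (cvgM (cvg_cst (18 : R)) cvg_invr_ln_nat).
  by rewrite !mulr0 addr0; apply.
apply: (squeeze_cvgr _ (cvg_cst 0) b_cvg).
apply: filterS (ln_nat_ge_near 1) => n ln_ge1.
set l := ln (n%:R : R) in ln_ge1 *; have l_gt0 : 0 < l by lra.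
rewrite divr_ge0 ?sqr_ge0 ?(ltW l_gt0) //= /b -expr2 expr_div_n sqr_sqrtr ?(ltW l_gt0) //.
rewrite mulrA -mulrDl ler_pM2r ?invr_gt0 // -[r n ^+ 2](real_normK (num_real _)).
have := sqr_ge0 (`|r n| - 3); rewrite !expr2; nra.
Qed.

Lemma near_exp2_truncn_le :
  \forall n \near \oo, 0 < ln (n%:R : R) /\ (2 ^ (Num.truncn (r n)).+2 <= n)%N.
Proof.
have r_le1 : \forall n \near \oo, `|r n / Num.sqrt (ln (n%:R : R))| <= 1.
  by move/cvgr0Pnorm_le : r_small; apply.
apply: (filterS3 _ _ (nbhs_infty_ge 1) (ln_nat_ge_near (4 : R)) r_le1) => n n_gt0 ln_ge4.
set l := ln _ in ln_ge4 *; have l_gt0 : 0 < l by lra.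
have q_gt0 : 0 < Num.sqrt l by rewrite sqrtr_gt0.
have ql : Num.sqrt l ^+ 2 = l by rewrite sqr_sqrtr ?ltW.
rewrite normrM normfV (gtr0_norm q_gt0) ler_pdivrMr // mul1r => r_le; split=> //.
apply: exp2_le_of_le_ln n_gt0 _; rewrite -/l -addn2 natrD.
apply: (@le_trans _ _ l); last exact: lexx.
have := truncn_le_norm (r n).
move: (Num.sqrt l) q_gt0 ql r_le => q q_gt0 ql r_le; rewrite -ql in ln_ge4 *.
have q_ge2 : 2 <= q by nra.
nra.
Qed.

End Asymptotics.

Theorem mainTheorem3 (R : realType) (eps : R) (r : nat -> R) :
  0 < eps < 1 ->
  (fun n : nat => r n / Num.sqrt (ln (n%:R : R))) @ \oo --> (0 : R) ->
  exists delta : nat -> R,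
    delta @ \oo --> (0 : R) /\
    \forall n \near \oo,
      exists (m : nat) (C : 'I_m -> 'I_n -> D3),
        forall (S : {set 'I_m}) (w : 'I_m -> R),
          is_code_sparsifier C eps S w ->
          (n%:R : R) `^ (r n - delta n) <= (#|S|)%:R.
Proof.
move=> /andP[_ eps_lt1] r_small.
pose k n := Num.truncn (r n).
pose M n := ((n %/ 2 ^ (k n).+2) ^ (k n).+1)%N.
exists (fun n => Num.max 0 (r n - ln (M n)%:R / ln n%:R)); split.
  apply: (squeeze_cvgr _ (cvg_cst 0) (cvg_sqr_normr_add3_div_ln r_small)).
  apply: filterS (near_exp2_truncn_le r_small) => n [ln_gt0 n_large].
  by rewrite le_max lexx ge_max divr_ge0 ?sqr_ge0 ?(ltW ln_gt0) ?truncn_defect_le.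
apply: filterS (near_exp2_truncn_le r_small) => n [ln_gt0 n_large].
have [m [C unsparsifiable]] := D3_unsparsifiable eps_lt1 (leq_divM n (2 ^ (k n).+2)).
exists m, C => S w spS; apply: le_trans (_ : _ <= (M n)%:R) _; last first.
  by rewrite ler_nat (unsparsifiable S w spS).
apply: powR_le_of_le_ln; rewrite // ?ltr0n ?expn_gt0 ?divn_gt0 ?expn_gt0 ?n_large //.
by rewrite lerBlDr -lerBlDl le_max lexx orbT.
Qed.
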